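(* There exist a finite-dimensional real vector space $Y$, ordered by a closed cone $Y_+$ with non-empty interior, and a linear operator $B: Y \to Y$ such that the dual semigroup $(e^{tB'})_{t\ge0}$ is individually eventually nonnegative with respect to the dual cone $Y'_+$, but $(e^{tB})_{t\ge0}$ is not individually eventually nonnegative with respect to $Y_+$. (Equivalently, the dual of an individually eventually nonnegative matrix semigroup need not be individually eventually nonnegative.)
   Context: For a finite-dimensional real vector space $X$ ordered by a closed cone $X_+$ with non-empty interior and $A: X\to X$ linear, $(e^{tA})_{t\ge0}$ is individually eventually nonnegative if for each $x\in X_+$ there is $t_0\ge0$ with $e^{tA}x\in X_+$ for all $t\ge t_0$. The dual cone is $X'_+ := \{x' \in X' : \langle x', x\rangle\ge0\ \forall x\in X_+\}$ and $A'$ is the dual operator on $X'$. *)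

From HB Require Import structures.
From mathcomp Require Import all_boot all_order all_algebra.
From mathcomp Require Import all_classical all_reals all_analysis.
Set Implicit Arguments. Unset Strict Implicit. Unset Printing Implicit Defensive.
Import Order.TTheory GRing.Theory Num.Theory.
Import numFieldNormedType.Exports.
Local Open Scope classical_set_scope.
Local Open Scope ring_scope.

(* The finite-dimensional real vector space Y of dimension n is modelled as
   column vectors 'cV[R]_n; its dual Y' as row vectors 'rV[R]_n with the
   pairing <x', x> = (x' *m x) 0 0.  A linear operator B : Y -> Y is a matrix
   'M[R]_n acting by x |-> B *m x; its dual B' acts by x' |-> x' *m B. *)

Definition expmx (R : realType) (n : nat) (A : 'M[R]_n) : 'M[R]_n :=
  limn (fun N : nat => \sum_(k < N) (k`!%:R)^-1 *: A ^+ k).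

Definition is_cone (R : realType) (n : nat) (C : set 'cV[R]_n) : Prop :=
  [/\ C 0,
      (forall x y, C x -> C y -> C (x + y)),
      (forall (a : R) x, 0 <= a -> C x -> C (a *: x)) &
      (forall x, C x -> C (- x) -> x = 0)].

Definition is_closed_solid_cone (R : realType) (n : nat) (C : set 'cV[R]_n) : Prop :=
  [/\ is_cone C, closed C & (interior C) !=set0].

Definition dual_cone (R : realType) (n : nat) (C : set 'cV[R]_n) : set 'rV[R]_n :=
  [set x' | forall x, C x -> 0 <= (x' *m x) 0 0].

Definition indiv_ev_nonneg (R : realType) (n : nat) (C : set 'cV[R]_n) (A : 'M[R]_n) : Prop :=
  forall x, C x -> exists t0 : R, 0 <= t0 /\
    forall t : R, t0 <= t -> C (expmx (t *: A) *m x).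

(* dual semigroup (e^{tA'})_{t>=0} on Y' individually eventually nonnegative
   w.r.t. the dual cone; e^{tA'} x' = x' *m e^{tA} *)
Definition dual_indiv_ev_nonneg (R : realType) (n : nat) (C : set 'cV[R]_n) (A : 'M[R]_n) : Prop :=
  forall x', dual_cone C x' -> exists t0 : R, 0 <= t0 /\
    forall t : R, t0 <= t -> dual_cone C (x' *m expmx (t *: A)).

From HB Require Import structures.
From mathcomp Require Import all_boot all_order all_algebra.
From mathcomp Require Import all_classical all_reals all_analysis.
From mathcomp Require Import ring lra.
Import Order.TTheory GRing.Theory Num.Theory.
Set Implicit Arguments. Unset Strict Implicit. Unset Printing Implicit Defensive.
Import numFieldNormedType.Exports.
Local Open Scope classical_set_scope.
Local Open Scope ring_scope.

(* Counterexample in Y = R^3 ordered by the Lorentz (ice-cream) cone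
   C = { x | x0^2 + x1^2 <= x2^2, x2 >= 0 } with the nilpotent generator
         B = [[0, 2, 0], [-3, 0, 3], [0, 2, 0]],   B^3 = 0,
   so that e^{tB} = 1 + tB + t^2/2 B^2 is an explicit quadratic polynomial.
   1. C is a closed pointed cone with non-empty interior, and it is
      self-dual: y is in the dual cone iff y^T lies in C (the Lorentz
      form satisfies a reverse Cauchy-Schwarz inequality on C).
   2. Dual side: for y^T = p in C, the Lorentz form of e^{tB}^T p equals
      q(p) + 2ts(p1 + ts) with s = p0 + p2 >= 0, which is nonnegative as
      soon as ts >= |p1|; hence every dual orbit eventually stays in C.
   3. Primal side: e^{tB}(-1, 0, 1) = (6t^2 - 1, 6t, 6t^2 + 1) has Lorentz
      form -12 t^2 < 0, so this orbit never returns to C for t > 0. *)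

Definition minkowski (R : numDomainType) (a b c : R) : R := c ^+ 2 - a ^+ 2 - b ^+ 2.

Lemma lorentz_pairing (R : realFieldType) (a b c d e f : R) :
  0 <= minkowski a b c -> 0 <= c -> 0 <= minkowski d e f -> 0 <= f ->
  a * d + b * e <= c * f.
Proof.
rewrite /minkowski => abc c0 def f0.
have cauchy_schwarz : (a * d + b * e) ^+ 2 <= (a ^+ 2 + b ^+ 2) * (d ^+ 2 + e ^+ 2).
  rewrite -subr_ge0.
  have -> : (a ^+ 2 + b ^+ 2) * (d ^+ 2 + e ^+ 2) - (a * d + b * e) ^+ 2
          = (a * e - b * d) ^+ 2 by ring.
  exact: sqr_ge0.
have : (a ^+ 2 + b ^+ 2) * (d ^+ 2 + e ^+ 2) <= (c * f) ^+ 2.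
  rewrite exprMn; apply: ler_pM; rewrite ?addr_ge0 ?sqr_ge0 //; lra.
have : 0 <= c * f by apply: mulr_ge0.
nra.
Qed.

Lemma expmx_nilpotent (R : realType) (n k : nat) (A : 'M[R]_n) : A ^+ k = 0 ->
  expmx A = \sum_(i < k) (i`!%:R)^-1 *: A ^+ i.
Proof.
move=> Ak; apply: norm_lim_near_cst; exists k => // N /= kN.
rewrite -(subnKC kN) big_split_ord /= [X in _ + X]big1 ?addr0 // => i _.
by rewrite exprD Ak mul0r scaler0.
Qed.

Section LorentzCounterexample.
Variable R : realType.

Definition i0 : 'I_3 := ord0.
Definition i1 : 'I_3 := lift ord0 ord0.
Definition i2 : 'I_3 := lift ord0 (lift ord0 ord0).

Definition v3 (a b c : R) : 'cV[R]_3 := \col_(i < 3) [:: a; b; c]`_i.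

Lemma v3_coords (x : 'cV[R]_3) : x = v3 (x i0 0) (x i1 0) (x i2 0).
Proof.
apply/matrixP => i j; rewrite ord1 mxE.
case: i => [[|[|[|//]]] ?] /=; congr (x _ _); exact: val_inj.
Qed.

Lemma pairing3 (y : 'rV[R]_3) (x : 'cV[R]_3) :
  (y *m x) 0 0 = y 0 i0 * x i0 0 + y 0 i1 * x i1 0 + y 0 i2 * x i2 0.
Proof. by rewrite mxE !big_ord_recl big_ord0 addr0 addrA. Qed.

Definition lorentz_form (x : 'cV[R]_3) : R := minkowski (x i0 0) (x i1 0) (x i2 0).

Definition lorentz_cone : set 'cV[R]_3 := [set x | 0 <= lorentz_form x /\ 0 <= x i2 0].

Lemma lorentz_cone_v3 (a b c : R) :
  lorentz_cone (v3 a b c) <-> 0 <= minkowski a b c /\ 0 <= c.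
Proof. by rewrite /lorentz_cone /lorentz_form /= !mxE. Qed.

(* Closure under addition is the reverse Cauchy-Schwarz inequality. *)
Lemma lorentz_cone_is_cone : is_cone lorentz_cone.
Proof.
rewrite /lorentz_cone /lorentz_form /minkowski; split => /=.
- by rewrite !mxE expr0n /= !subr0.
- move=> x y [qx tx] [qy ty]; rewrite !mxE.
  have := lorentz_pairing qx tx qy ty; split; [nra | lra].
- move=> a x a0 [qx tx]; rewrite !mxE; split; last exact: mulr_ge0.
  by rewrite !exprMn -!mulrBr mulr_ge0 ?sqr_ge0.
- move=> x [qx tx]; rewrite !mxE => -[_ tNx].
  have t0 : x i2 0 = 0 by lra.
  rewrite [x]v3_coords t0; apply/matrixP => i j; rewrite !mxE.
  by case: i => [[|[|[|//]]] ?] /=; nra.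
Qed.

Lemma lorentz_form_continuous : continuous lorentz_form.
Proof.
have square i : continuous (fun x : 'cV[R]_3 => x i 0 ^+ 2).
  move=> x; have coord : continuous (fun y : 'cV[R]_3 => y i 0).
    exact: coord_continuous.
  exact: (continuousM (coord x) (coord x)).
move=> x; exact: continuousB (continuousB (square i2 x) (square i0 x)) (square i1 x).
Qed.

Lemma lorentz_cone_closed : closed lorentz_cone.
Proof.
have closed_ge0 (f : 'cV[R]_3 -> R) : continuous f -> closed (f @^-1` [set r : R | 0 <= r]).
  by move=> cf; apply: (proj1 (continuous_closedP f) cf); exact: closed_ge.
have -> : lorentz_cone = lorentz_form @^-1` [set r | 0 <= r]
                      `&` (fun x => x i2 0) @^-1` [set r | 0 <= r] by [].
apply: closedI; apply: closed_ge0; [exact: lorentz_form_continuous | exact: coord_continuous].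
Qed.

Lemma lorentz_cone_solid : interior lorentz_cone !=set0.
Proof.
pose U := lorentz_form @^-1` [set r | 0 < r] `&` (fun x : 'cV[R]_3 => x i2 0) @^-1` [set r | 0 < r].
have U_open : open U.
  apply: openI; apply: open_comp; try exact: open_gt; move=> x _.
  - exact: lorentz_form_continuous.
  - exact: coord_continuous.
have U_sub : U `<=` lorentz_cone by move=> x [qx tx]; split; apply: ltW.
rewrite (open_subsetE _ U_open) in U_sub.
exists (v3 0 0 1); apply: U_sub.
by rewrite /U /= /lorentz_form !mxE /minkowski expr1n expr0n /= !subr0.
Qed.

(* Self-duality.  A dual vector y is tested against (0, 0, 1) and against the
   boundary vector (-y0, -y1, |(y0, y1)|); the converse is lorentz_pairing. *)
Lemma lorentz_cone_self_dual (y : 'rV[R]_3) :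
  dual_cone lorentz_cone y <-> lorentz_cone y^T.
Proof.
split=> [y_dual | ytr x x_cone].
- have y_test a b c : 0 <= minkowski a b c -> 0 <= c ->
      0 <= y 0 i0 * a + y 0 i1 * b + y 0 i2 * c.
    move=> qabc c0; have := y_dual (v3 a b c); rewrite pairing3 !mxE /=.
    by apply; apply/lorentz_cone_v3.
  rewrite /lorentz_cone /lorentz_form /= !mxE.
  have ty : 0 <= y 0 i2.
    have := y_test 0 0 1; rewrite /minkowski expr1n expr0n /= !subr0 !mulr0 !add0r mulr1.
    by apply; lra.
  split=> //; set r := Num.sqrt (y 0 i0 ^+ 2 + y 0 i1 ^+ 2).
  have r0 : 0 <= r by exact: sqrtr_ge0.
  have r2 : r ^+ 2 = y 0 i0 ^+ 2 + y 0 i1 ^+ 2 by rewrite sqr_sqrtr ?addr_ge0 ?sqr_ge0.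
  have on_boundary : 0 <= minkowski (- y 0 i0) (- y 0 i1) r.
    by rewrite /minkowski !sqrrN r2; lra.
  have pair_ge0 := y_test _ _ _ on_boundary r0.
  rewrite /minkowski; suff : r ^+ 2 <= y 0 i2 ^+ 2 by rewrite r2; lra.
  have : r * (y 0 i2 - r) >= 0 by nra.
  case: (ltrP r (y 0 i2)) => [? _ | ?]; nra.
- move: ytr x_cone; rewrite pairing3 /lorentz_cone /lorentz_form /= !mxE.
  move=> [qy ty] [qx tx].
  suff : - y 0 i0 * x i0 0 - y 0 i1 * x i1 0 <= y 0 i2 * x i2 0 by lra.
  by rewrite -!mulNr; apply: lorentz_pairing => //; rewrite /minkowski !sqrrN.
Qed.

Definition nilB : 'M[R]_3 :=
  \matrix_(i, j) (nth [::] [:: [:: 0; 2; 0]; [:: -3; 0; 3]; [:: 0; 2; 0]] i)`_j.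

Lemma nilB_cube : nilB ^+ 3 = 0.
Proof.
apply/matrixP => i j; rewrite !exprS expr0 mulr1 -!mulmxE.
rewrite !mxE !big_ord_recl !big_ord0 !mxE !big_ord_recl !big_ord0 !mxE /=.
by case: i => [[|[|[|//]]] ?]; case: j => [[|[|[|//]]] ?] /=; ring.
Qed.

Lemma expmx_nilB (t : R) :
  expmx (t *: nilB) = 1 + t *: nilB + (2^-1 * t ^+ 2) *: nilB ^+ 2.
Proof.
rewrite (@expmx_nilpotent _ _ 3); last by rewrite exprZn nilB_cube scaler0.
by rewrite !big_ord_recr big_ord0 /= add0r expr0 expr1 !invr1 !scale1r exprZn scalerA.
Qed.

Lemma expB_orbit (t a b c : R) :
  expmx (t *: nilB) *m v3 a b c =
  v3 (a + 2 * t * b + 3 * t ^+ 2 * (c - a)) (b + 3 * t * (c - a))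
     (c + 2 * t * b + 3 * t ^+ 2 * (c - a)).
Proof.
rewrite expmx_nilB (expr2 nilB) -mulmxE; apply/matrixP => i j; rewrite ord1.
rewrite !mxE !big_ord_recl !big_ord0 !mxE !big_ord_recl !big_ord0 !mxE /=.
by case: i => [[|[|[|//]]] ?] /=; field.
Qed.

Lemma expB_dual_orbit (t p0 p1 p2 : R) :
  (expmx (t *: nilB))^T *m v3 p0 p1 p2 =
  v3 (p0 - 3 * t * p1 - 3 * t ^+ 2 * (p0 + p2)) (p1 + 2 * t * (p0 + p2))
     (p2 + 3 * t * p1 + 3 * t ^+ 2 * (p0 + p2)).
Proof.
rewrite expmx_nilB (expr2 nilB) -mulmxE; apply/matrixP => i j; rewrite ord1.
rewrite !mxE !big_ord_recl !big_ord0 !mxE !big_ord_recl !big_ord0 !mxE /=.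
by case: i => [[|[|[|//]]] ?] /=; field.
Qed.

Lemma expB_leaves_cone (t : R) : 0 < t ->
  ~ lorentz_cone (expmx (t *: nilB) *m v3 (-1) 0 1).
Proof.
move=> t_gt0; rewrite expB_orbit lorentz_cone_v3 => -[q _]; move: q.
have -> : minkowski (-1 + 2 * t * 0 + 3 * t ^+ 2 * (1 - -1)) (0 + 3 * t * (1 - -1))
            (1 + 2 * t * 0 + 3 * t ^+ 2 * (1 - -1)) = - 12 * t ^+ 2.
  by rewrite /minkowski; ring.
by rewrite mulNr oppr_ge0 leNgt mulr_gt0 // exprn_gt0.
Qed.

(* Every dual orbit starting in C eventually stays in C: its Lorentz form
   grows like q(p) + 2ts(p1 + ts), and it is nonnegative once ts >= |p1|. *)
Lemma expB_dual_eventually (p0 p1 p2 : R) : 0 <= minkowski p0 p1 p2 -> 0 <= p2 ->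
  exists t0 : R, 0 <= t0 /\ forall t : R, t0 <= t ->
    lorentz_cone ((expmx (t *: nilB))^T *m v3 p0 p1 p2).
Proof.
move=> q p2_ge0; pose s := p0 + p2.
have s_ge0 : 0 <= s by rewrite /s; move: q; rewrite /minkowski; nra.
have growth t : minkowski (p0 - 3 * t * p1 - 3 * t ^+ 2 * s) (p1 + 2 * t * s)
    (p2 + 3 * t * p1 + 3 * t ^+ 2 * s)
  = minkowski p0 p1 p2 + 2 * (t * s) * (p1 + t * s).
  by rewrite /minkowski /s; ring.
exists (`|p1| / s); split=> [|t t_ge]; first exact: divr_ge0.
have t_ge0 : 0 <= t by apply: le_trans t_ge; exact: divr_ge0.
have dominates : `|p1| <= t * s.
  have [s_eq0 | s_neq0] := eqVneq s 0.
  - have p1_sq : p1 ^+ 2 <= 0 by move: q s_eq0; rewrite /minkowski /s; nra.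
    have p1_0 : p1 = 0 by apply/eqP; rewrite -sqrf_eq0 eq_le p1_sq sqr_ge0.
    by rewrite s_eq0 mulr0 p1_0 normr0.
  - by rewrite -ler_pdivrMr // lt_def s_neq0 s_ge0.
have p1_dom : 0 <= p1 + t * s by have := ler_norm (- p1); rewrite normrN; lra.
rewrite expB_dual_orbit lorentz_cone_v3 -/s growth; split.
- by apply: addr_ge0 => //; rewrite mulr_ge0 ?mulr_ge0.
- by nra.
Qed.
End LorentzCounterexample.

Theorem mainTheorem7 (R : realType) :
  exists (n : nat) (C : set 'cV[R]_n) (B : 'M[R]_n),
    is_closed_solid_cone C /\
    dual_indiv_ev_nonneg C B /\ ~ indiv_ev_nonneg C B.
Proof.
exists 3%N, (@lorentz_cone R), (nilB R); split.
  split; [exact: lorentz_cone_is_cone | exact: lorentz_cone_closed | exact: lorentz_cone_solid].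
split.
- move=> y /lorentz_cone_self_dual; rewrite [y^T]v3_coords => /lorentz_cone_v3 [qy ty].
  have [t0 [t0_ge0 eventually]] := expB_dual_eventually qy ty.
  exists t0; split=> // t t_ge; apply/lorentz_cone_self_dual.
  by rewrite trmx_mul [y^T]v3_coords; exact: eventually.
- move=> /(_ (v3 (-1) 0 1)) [|t0 [t0_ge0 eventually]].
    by apply/lorentz_cone_v3; rewrite /minkowski; split; lra.
  apply: (@expB_leaves_cone R (t0 + 1)); first lra.
  by apply: eventually; lra.
Qed.
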